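(* The Max-Util objective is subject to strict-improvement by a manipulator $m^-$ (one who can only hide existing edges) over undirected networks. That is, there exist a number $k$ of coalitions, an undirected social network $G=\langle A,E\rangle$, an agent $m\in A$ and a manipulation in which $m$ removes some of the edges of $G$ incident to $m$, producing the reported network $G^m$, such that \[\min_{P\in O(G^m)} u(m,P) \;>\; \max_{P\in O(G)} u(m,P),\] where $O(\cdot)$ denotes the set of Max-Util solutions and $u(m,P)$ is computed in the true network $G$.
   Context: Let $A=\{a_1,\dots,a_n\}$ be a finite nonempty set of agents and $G=\langle A,E\rangle$ a graph without self-loops (the social network). $N(a)$ is the set of neighbours of $a$ in $G$. For a coalition $C\subseteq A$ with $a\in C$, $u(a,C)=|C\cap N(a)|$. For $0<k\le n$, $\Pi_k$ is the set of partitions of $A$ into exactly $k$ nonempty coalitions; for $P\in\Pi_k$, $u(a,P)=u(a,C)$ where $C\in P$ contains $a$. The Max-Util objective: $O(G)$ is the set of $P\in\Pi_k$ maximizing $\sum_{a\in A}u(a,P)$ (utilities computed in $G$). A manipulator $m\in A$ of type $m^-$ in an undirected network may remove any subset of the edges incident to $m$; the resulting network is $G^m$. The utility $u(m,P)$ of the manipulator is always computed with respect to his true neighbours in the original $G$. *)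

From mathcomp Require Import all_boot.
Set Implicit Arguments. Unset Strict Implicit. Unset Printing Implicit Defensive.

Section SocialNetwork.
Variable T : finType.

Definition undirected_graph (e : rel T) : Prop := symmetric e /\ irreflexive e.

Definition nbhd (e : rel T) (a : T) : {set T} := [set b | e a b].

Definition util_coal (e : rel T) (a : T) (C : {set T}) : nat := #|C :&: nbhd e a|.

Definition util (e : rel T) (a : T) (P : {set {set T}}) : nat :=
  util_coal e a (pblock P a).

Definition Pi (k : nat) (P : {set {set T}}) : Prop :=
  partition P [set: T] /\ #|P| = k.

Definition welfare (e : rel T) (P : {set {set T}}) : nat := \sum_(a : T) util e a P.

Definition maxutil (e : rel T) (k : nat) (P : {set {set T}}) : Prop :=
  Pi k P /\ forall Q, Pi k Q -> welfare e Q <= welfare e P.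

Definition hides_edges (e e' : rel T) (m : T) : Prop :=
  symmetric e' /\ (forall x y, e' x y -> e x y) /\
  (forall x y, e x y -> ~~ e' x y -> (x == m) || (y == m)).

End SocialNetwork.

From mathcomp Require Import all_boot.
Set Implicit Arguments. Unset Strict Implicit. Unset Printing Implicit Defensive.

(* Eight agents, four coalitions, manipulator 0.  In the true network every
   welfare-maximal partition is at least as good as the dense coalition
   {0,4,5,6,7} plus three singletons (welfare 18), and all of them give agent 0
   at most 3 true friends in his coalition.  Hiding the edges 0-4 and 0-6 makes
   {0,1,2,3,5} the dense coalition (welfare 16), and every optimal partition of
   the reported network gives 0 at least 4 true friends.  Partitions into exactly
   k coalitions are the surjective labellings of the agents by {0,...,k-1}, so
   both facts reduce to a check of the 4^8 labellings. *)

Section Labellings.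
Variable T : finType.
Implicit Types (e : rel T) (P : {set {set T}}) (f : T -> nat).

Definition labelled_by P f := forall a b, (b \in pblock P a) = (f a == f b).

Definition surj_labelling k f :=
  (forall a, f a < k) /\ (forall i, i < k -> exists a, f a = i).

Definition label_util e f a : nat := \sum_b (e a b && (f a == f b)).

Lemma util_labelled e P f a : labelled_by P f -> util e a P = label_util e f a.
Proof.
move=> labP; rewrite /util /util_coal -sum1_card big_mkcond /=.
by apply: eq_bigr => b _; rewrite !inE labP andbC; case: (_ && _).
Qed.

Lemma welfare_labelled e P f :
  labelled_by P f -> welfare e P = \sum_a label_util e f a.
Proof. by move=> labP; apply: eq_bigr => a _; apply: util_labelled. Qed.

Definition block_index P a := index (pblock P a) (enum P).

Lemma block_index_labelling k P :
  Pi k P -> surj_labelling k (block_index P) /\ labelled_by P (block_index P).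
Proof.
case=> /and3P[/eqP covP triP notP0] cardP.
have blockP a : pblock P a \in enum P by rewrite mem_enum pblock_mem ?covP.
split; [split|] => [a | i | a b].
- by rewrite /block_index -cardP cardE index_mem.
- rewrite -cardP cardE => lt_i; set B := nth set0 (enum P) i.
  have PB : B \in P by rewrite -mem_enum mem_nth.
  have /set0Pn[a Ba] : B != set0 by apply: contraNneq notP0 => <-.
  exists a; rewrite /block_index (def_pblock triP PB Ba).
  by rewrite index_uniq ?enum_uniq.
- rewrite -eq_pblock ?covP // /block_index; apply/eqP/eqP => [-> // | eq_ab].
  by rewrite -(nth_index set0 (blockP a)) -(nth_index set0 (blockP b)) eq_ab.
Qed.

Lemma preim_partition_labelling k f : surj_labelling k f ->
  Pi k (preim_partition f [set: T]) /\ labelled_by (preim_partition f [set: T]) f.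
Proof.
case=> lt_f onto_f; set P := preim_partition f [set: T].
have eqi : {in [set: T] & &, equivalence_rel (fun a b => f a == f b)}.
  by split=> // /eqP->.
split; last by move=> a b; rewrite (pblock_equivalence_partition eqi) ?inE.
split; first exact: preim_partitionP.
pose block (i : 'I_k) := [set a | f a == i].
have block_inj : injective block.
  move=> i j /setP eq_ij; have [a fa] := onto_f i (ltn_ord i).
  by move: (eq_ij a); rewrite !inE fa eqxx => /esym/eqP/val_inj.
have -> : P = block @: [set: 'I_k].
  apply/setP => B; apply/imsetP/imsetP => [[a _ ->] | [i _ ->]].
    by exists (Ordinal (lt_f a)) => //; apply/setP => b; rewrite !inE eq_sym.
  have [a fa] := onto_f i (ltn_ord i).
  by exists a => //; apply/setP => b; rewrite !inE fa eq_sym.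
by rewrite card_imset // cardsT card_ord.
Qed.

End Labellings.

Fixpoint words n k : seq (seq nat) :=
  if n is n'.+1 then [seq i :: s | i <- iota 0 k, s <- words n' k] else [:: [::]].

Lemma mem_words n k l :
  (l \in words n k) = (size l == n) && all (fun x => x < k) l.
Proof.
elim: n l => [|n IHn] [|x l] //=.
  by apply/allpairsPdep => -[i [s [_ _]]].
rewrite eqSS; apply/allpairsPdep/idP => [[i [s [/= i_lt s_in [-> ->]]]] |].
  by move: s_in i_lt; rewrite IHn mem_iota add0n => /andP[-> ->] /= ->.
by case/and3P=> size_l x_lt l_lt; exists x, l; rewrite mem_iota IHn size_l.
Qed.

Definition labellings n k := [seq l <- words n k | all (mem l) (iota 0 k)].

Definition edge_rel (es : seq (nat * nat)) : rel nat :=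
  fun a b => ((a, b) \in es) || ((b, a) \in es).

Section OrdinalLabellings.
Variable n : nat.

Definition ord_rel (r : rel nat) : rel 'I_n := fun a b => r a b.

Definition seq_util (r : rel nat) (l : seq nat) a :=
  count (fun b => r a b && (nth 0 l a == nth 0 l b)) (iota 0 n).

Definition seq_welfare (r : rel nat) (l : seq nat) :=
  sumn [seq seq_util r l a | a <- iota 0 n].

Lemma sum_ord_sumn (F : nat -> nat) : \sum_(i < n) F i = sumn (map F (iota 0 n)).
Proof. by rewrite -(big_mkord xpredT) /index_iota subn0 sumnE big_map. Qed.

Lemma label_util_seq (e : rel 'I_n) (r : rel nat) l (a : 'I_n) :
  e =2 ord_rel r ->
  label_util e (fun b => nth 0 l b) a = seq_util r l a.
Proof.
move=> e_r; rewrite /label_util /seq_util -sumn_count -sum_ord_sumn.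
by apply: eq_bigr => b _; rewrite e_r.
Qed.

Lemma label_welfare_seq (e : rel 'I_n) (r : rel nat) l :
  e =2 ord_rel r ->
  \sum_a label_util e (fun b => nth 0 l b) a = seq_welfare r l.
Proof.
move=> e_r; rewrite /seq_welfare -sum_ord_sumn.
by apply: eq_bigr => a _; apply: label_util_seq.
Qed.

Lemma labellings_surj k l :
  l \in labellings n k -> surj_labelling k (fun a : 'I_n => nth 0 l a).
Proof.
rewrite mem_filter mem_words => /and3P[/allP onto_l /eqP size_l /allP lt_l].
split=> [a | i lt_i]; first by apply/lt_l/mem_nth; rewrite size_l.
have l_i : i \in l by apply: onto_l; rewrite mem_iota.
have lt_idx : index i l < n by rewrite -size_l index_mem.
by exists (Ordinal lt_idx); rewrite /= nth_index.
Qed.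

Lemma surj_labelling_seq k (f : 'I_n -> nat) :
  surj_labelling k f -> map f (enum 'I_n) \in labellings n k.
Proof.
case=> lt_f onto_f; rewrite mem_filter mem_words size_map size_enum_ord eqxx.
apply/and3P; split=> //; apply/allP => i.
  by rewrite mem_iota => /onto_f[a <-]; apply: map_f; rewrite mem_enum.
by case/mapP=> a _ ->.
Qed.

Lemma nth_map_enum_ord (f : 'I_n -> nat) (a : 'I_n) :
  nth 0 (map f (enum 'I_n)) a = f a.
Proof. by rewrite (nth_map a) ?size_enum_ord // nth_ord_enum. Qed.

(* The witness [l0] bounds the optimal welfare from below, so it suffices to
   check [p] on the labellings that are at least as good as [l0]. *)
Lemma maxutil_certificate k (eW eU : rel 'I_n) (rW rU : rel nat) l0 (p : pred nat)
    (m : 'I_n) P :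
  eW =2 ord_rel rW -> eU =2 ord_rel rU ->
  l0 \in labellings n k ->
  all (fun l => (seq_welfare rW l0 <= seq_welfare rW l) ==> p (seq_util rU l m))
      (labellings n k) ->
  maxutil eW k P -> p (util eU m P).
Proof.
move=> eW_rW eU_rU l0_in /allP certif [PiP maxP].
have [surjP lab_idx] := block_index_labelling PiP.
set l := map (block_index P) (enum 'I_n).
have lab_l : labelled_by P (fun a : 'I_n => nth 0 l a).
  by move=> a b; rewrite !nth_map_enum_ord lab_idx.
have [PiP0 lab_l0] := preim_partition_labelling (labellings_surj l0_in).
have := maxP _ PiP0; rewrite (welfare_labelled _ lab_l0) (welfare_labelled _ lab_l).
rewrite !(label_welfare_seq _ eW_rW) => le_w.
have /implyP/(_ le_w) := certif l (surj_labelling_seq surjP).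
by rewrite (util_labelled _ _ lab_l) (label_util_seq _ _ eU_rU).
Qed.

Definition rel_table (r : rel nat) : seq (seq bool) := mkseq (fun a => mkseq (r a) n) n.

Definition table_rel (t : seq (seq bool)) : rel nat :=
  fun a b => nth false (nth [::] t a) b.

Lemma ord_rel_table (r : rel nat) : ord_rel r =2 ord_rel (table_rel (rel_table r)).
Proof. by move=> a b; rewrite /ord_rel /table_rel !nth_mkseq. Qed.

Lemma edge_rel_undirected es :
  all (fun p => p.1 != p.2) es -> undirected_graph (ord_rel (edge_rel es)).
Proof.
move=> /allP loopless; split=> [a b | a]; first by rewrite /ord_rel /edge_rel orbC.
by rewrite /ord_rel /edge_rel orbb; apply/negP => /loopless; rewrite eqxx.
Qed.

Lemma edge_rel_hides (es hs : seq (nat * nat)) (m : 'I_n) :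
  all (fun p : nat * nat => (p.1 == m) || (p.2 == m)) hs ->
  hides_edges (ord_rel (edge_rel es))
              (ord_rel (edge_rel [seq p <- es | p \notin hs])) m.
Proof.
move=> /allP at_m; split; first by move=> a b; rewrite /ord_rel /edge_rel orbC.
split=> a b; rewrite /ord_rel /edge_rel !mem_filter.
  by case/orP=> /andP[_ ->]; rewrite ?orbT.
move=> e_ab; apply: contraR; rewrite -!val_eqE negb_or => /andP[a_m b_m].
have unhidden (x y : nat) : x != m -> y != m -> (x, y) \notin hs.
  by move=> x_m y_m; apply/negP => /at_m /=; rewrite (negbTE x_m) (negbTE y_m).
by case/orP: e_ab => e_ab; rewrite ?(unhidden a b) ?(unhidden b a) ?e_ab ?orbT.
Qed.

End OrdinalLabellings.

Definition true_edges : seq (nat * nat) :=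
  [:: (0,1); (0,2); (0,3); (0,4); (0,5); (0,6); (1,2); (1,3); (1,6); (2,3);
      (3,5); (4,5); (4,6); (4,7); (5,6); (5,7); (6,7)].

Definition hidden_edges : seq (nat * nat) := [:: (0,4); (0,6)].

Definition reported_edges := [seq p <- true_edges | p \notin hidden_edges].

(* The VM evaluates a global constant only once, so the enumeration reads the
   networks from these tables; evaluating [edge_rel] inside it is about twenty
   times slower. *)
Definition true_table := rel_table 8 (edge_rel true_edges).

Definition reported_table := rel_table 8 (edge_rel reported_edges).

Theorem proposition1 :
  exists (n k : nat) (e e' : rel 'I_n) (m : 'I_n),
    0 < n /\ 0 < k <= n /\
    undirected_graph e /\ hides_edges e e' m /\
    (forall P Q : {set {set 'I_n}},
        maxutil e' k P -> maxutil e k Q -> util e m Q < util e m P).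
Proof.
exists 8, 4, (ord_rel (edge_rel true_edges)), (ord_rel (edge_rel reported_edges)), ord0.
do 3!split => //; first exact: edge_rel_undirected.
split; first exact: edge_rel_hides.
have true_tableE : @ord_rel 8 (edge_rel true_edges) =2 ord_rel (table_rel true_table).
  exact: ord_rel_table.
have reported_tableE :
  @ord_rel 8 (edge_rel reported_edges) =2 ord_rel (table_rel reported_table).
  exact: ord_rel_table.
move=> P Q optP optQ; apply: (@leq_ltn_trans 3).
  by apply: (maxutil_certificate true_tableE true_tableE
              (l0 := [:: 0; 1; 2; 3; 0; 0; 0; 0]) (p := fun u => u <= 3) _ _ optQ);
     vm_compute.
by apply: (maxutil_certificate reported_tableE true_tableE
            (l0 := [:: 0; 0; 0; 0; 1; 0; 2; 3]) (p := fun u => 3 < u) _ _ optP);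
   vm_compute.
Qed.
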